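(* Let $k,n\ge1$ and $f:\{0,1,\dots,k\}^3\to\mathbb C$ arbitrary. For any triple $(\mathbf z^{[1]},\mathbf z^{[0]},\mathbf z^{[-1]})$ of $n$-bit strings with configuration basis numbers $\mathbf n=(n_s)_{s\in\{0,1\}^3}$, $$\mathbf E_\sigma f\Big(\sum_{(l,\nu)\in\sigma}z^{[1]}_l\oplus\nu,\ \sum_{(l,\nu)\in\sigma}z^{[0]}_l\oplus\nu,\ \sum_{(l,\nu)\in\sigma}z^{[-1]}_l\oplus\nu\Big)=2^{-k}\sum_{\mathbf k\in\mathcal P(k)}\binom{k}{\mathbf k}\Big(\prod_{s\in\{0,1\}^3}\Big(\frac{n_s+n_{\bar s}}{n}\Big)^{k_s}\Big)f\Big(\Big(\sum_{s\in\{0,1\}^3:\ s^{[t]}=1}k_s\Big)_{t\in\{1,0,-1\}}\Big).$$ In particular the average is a polynomial in $\mathbf n$.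
   Context: A random clause is $\sigma=((l_0,\nu_0),\dots,(l_{k-1},\nu_{k-1}))$ with each $l_q$ independent uniform in $\{0,\dots,n-1\}$ (repetitions allowed) and each $\nu_q$ independent uniform in $\{0,1\}$; sums over $(l,\nu)\in\sigma$ run over the $k$ pairs with multiplicity, and $\mathbf E_\sigma$ is expectation over $\sigma$. Configuration basis numbers: $n_s=|\{j:(z^{[1]}_j,z^{[0]}_j,z^{[-1]}_j)=s\}|$ for $s=s^{[1]}s^{[0]}s^{[-1]}\in\{0,1\}^3$; $\bar s$ is the bitwise complement. $\mathcal P(k)$ is the set of families $(k_s)_{s\in\{0,1\}^3}$ of nonnegative integers summing to $k$, and $\binom{k}{\mathbf k}=k!/\prod_s k_s!$. *)

From HB Require Import structures.
From mathcomp Require Import all_boot all_order all_algebra.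
From mathcomp Require Import complex.
From mathcomp Require Import reals.
Set Implicit Arguments. Unset Strict Implicit. Unset Printing Implicit Defensive.
Import Order.TTheory GRing.Theory Num.Theory.
Local Open Scope ring_scope.

(* A configuration s = s^[1] s^[0] s^[-1] in {0,1}^3 is encoded as
   ((s^[1], s^[0]), s^[-1]) : bool * bool * bool. *)
Definition cfg := (bool * bool * bool)%type.
Definition cfg1 (s : cfg) : bool := s.1.1.
Definition cfg0 (s : cfg) : bool := s.1.2.
Definition cfgm1 (s : cfg) : bool := s.2.
Definition cfgC (s : cfg) : cfg := ((~~ s.1.1, ~~ s.1.2), ~~ s.2).

Definition basis_num (n : nat) (z1 z0 zm1 : 'I_n -> bool) (s : cfg) : nat :=
  #|[set j : 'I_n | ((z1 j, z0 j), zm1 j) == s]|.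

Definition clause (n k : nat) := {ffun 'I_k -> 'I_n * bool}.

Definition clause_sum (n k : nat) (z : 'I_n -> bool) (sigma : clause n k) : nat :=
  (\sum_(q < k) (z (sigma q).1 (+) (sigma q).2 : nat))%N.

Definition clause_exp (C : fieldType) (n k : nat) (F : clause n k -> C) : C :=
  ((n * 2) ^ k)%N%:R^-1 * \sum_(sigma : clause n k) F sigma.

From HB Require Import structures.
From mathcomp Require Import all_boot all_order all_algebra.
From mathcomp Require Import complex reals.
From mathcomp Require Import zify ring.
Set Implicit Arguments. Unset Strict Implicit. Unset Printing Implicit Defensive.
Import Order.TTheory GRing.Theory Num.Theory.

(* The three clause sums only depend on the colour vector of the clause: how many of its k
   literals (l, nu) have configuration (z^[1]_l (+) nu, z^[0]_l (+) nu, z^[-1]_l (+) nu) = s,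
   for each s.  Exactly n_s + n_(bar s) of the 2n literals have configuration s, so the
   number of clauses with colour vector kk is the multinomial coefficient (k choose kk) times
   prod_s (n_s + n_(bar s))^(k_s). *)

Section FfunCons.
Variables (T : finType) (k : nat).

Definition ffun_cons (t : T) (h : {ffun 'I_k -> T}) : {ffun 'I_k.+1 -> T} :=
  [ffun i => oapp h t (unlift ord0 i)].

Lemma ffun_cons0 t h : ffun_cons t h ord0 = t.
Proof. by rewrite ffunE unlift_none. Qed.

Lemma ffun_consS t h j : ffun_cons t h (lift ord0 j) = h j.
Proof. by rewrite ffunE liftK. Qed.

Lemma big_ffun_ord_recl (R : Type) (idx : R) (op : Monoid.com_law idx)
    (F : {ffun 'I_k.+1 -> T} -> R) :
  \big[op/idx]_(h : {ffun 'I_k.+1 -> T}) F h =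
  \big[op/idx]_(t : T) \big[op/idx]_(h : {ffun 'I_k -> T}) F (ffun_cons t h).
Proof.
rewrite pair_big (reindex (fun p => ffun_cons p.1 p.2)) //=; apply: onW_bij.
exists (fun h : {ffun 'I_k.+1 -> T} => (h ord0, [ffun j => h (lift ord0 j)]))
  => [[t h] | h] /=.
  by rewrite ffun_cons0; congr pair; apply/ffunP => j; rewrite ffunE ffun_consS.
by apply/ffunP => i; rewrite ffunE; case: (unliftP ord0 i) => [j|] -> /=; rewrite ?ffunE.
Qed.

End FfunCons.

Section Colourings.
Variable C : finType.

Definition colour_count k (h : {ffun 'I_k -> C}) (s : C) : nat :=
  \sum_(q < k) (h q == s).

Lemma sum_pred_eq (P : pred C) x : \sum_(s | P s) (x == s) = P x.
Proof.
rewrite big_mkcond (bigD1 x) //= eqxx big1 ?addn0; first by case: (P x).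
by move=> s; rewrite eq_sym => /negbTE ->; case: (P s).
Qed.

Lemma sum_pred_colour_count (P : pred C) k (h : {ffun 'I_k -> C}) :
  \sum_(q < k) P (h q) = \sum_(s | P s) colour_count h s.
Proof. by rewrite exchange_big; apply: eq_bigr => q _; rewrite sum_pred_eq. Qed.

Lemma sum_colour_count k (h : {ffun 'I_k -> C}) : \sum_s colour_count h s = k.
Proof. by rewrite -(sum_pred_colour_count predT) sum1_card card_ord. Qed.

Lemma colour_count_le k (h : {ffun 'I_k -> C}) s : colour_count h s <= k.
Proof. by rewrite -[X in _ <= X](sum_colour_count h) (bigD1 s) //= leq_addr. Qed.

Lemma colour_count_cons k t (h : {ffun 'I_k -> C}) s :
  colour_count (ffun_cons t h) s = (t == s) + colour_count h s.
Proof.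
rewrite /colour_count big_ord_recl ffun_cons0.
by congr addn; apply: eq_bigr => q _; rewrite ffun_consS.
Qed.

Definition colourings k (m : C -> nat) :=
  [set h : {ffun 'I_k -> C} | [forall s, colour_count h s == m s]].

Lemma ffun_cons_colourings k m t (h : {ffun 'I_k -> C}) :
  (ffun_cons t h \in colourings k.+1 m) =
  (0 < m t) && (h \in colourings k (fun s => m s - (t == s))).
Proof.
rewrite !inE; have [mt0 | mt_gt0] /= := posnP (m t).
  by apply/forallP => /(_ t); rewrite colour_count_cons eqxx mt0.
apply: eq_forallb => s; rewrite colour_count_cons.
by case: (eqVneq t s) => [<-|_] /=; [apply/eqP/eqP; lia | rewrite subn0].
Qed.

Lemma card_colourings_rec k m :
  #|colourings k.+1 m| = \sum_(t | 0 < m t) #|colourings k (fun s => m s - (t == s))|.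
Proof.
rewrite -sum1_card big_mkcond big_ffun_ord_recl [RHS]big_mkcond /=.
apply: eq_bigr => t _; under eq_bigr do rewrite ffun_cons_colourings.
case: (0 < m t) => /=; last by rewrite big1.
by rewrite -big_mkcond sum1_card.
Qed.

Lemma bigD1_decr (R : Type) (idx : R) (op : Monoid.com_law idx) (F : nat -> R)
    (m : C -> nat) t :
  \big[op/idx]_s F (m s - (t == s)) = op (F (m t).-1) (\big[op/idx]_(s | s != t) F (m s)).
Proof.
rewrite (bigD1 t) //= eqxx subn1 (eq_bigr (F \o m)) // => s.
by rewrite eq_sym => /negbTE ->; rewrite subn0.
Qed.

Lemma card_colourings k m :
  \sum_s m s = k -> #|colourings k m| * \prod_s (m s)`! = k`!.
Proof.
elim: k m => [|k IHk] m sum_m.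
  have m0 s : m s = 0.
    by apply/eqP; move/eqP: sum_m; rewrite sum_nat_eq0 => /forallP/(_ s).
  rewrite big1 => [|s _]; last by rewrite m0.
  rewrite (_ : colourings 0 m = setT) ?cardsT ?card_ffun ?card_ord //.
  by apply/setP => h; rewrite !inE; apply/forallP => s; rewrite m0 /colour_count big_ord0.
have step t : 0 < m t ->
    #|colourings k (fun s => m s - (t == s))| * \prod_s (m s)`! = m t * k`!.
  move=> mt_gt0; move: sum_m; rewrite (bigD1 t) //= => sum_m.
  have sum_decr : \sum_s (m s - (t == s)) = k by rewrite (bigD1_decr _ id) /=; lia.
  rewrite -(IHk _ sum_decr) (bigD1_decr _ factorial) (bigD1 t) //=.
  rewrite -(prednK mt_gt0) factS prednK //.
  by rewrite -!mulnA mulnCA.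
rewrite card_colourings_rec big_distrl /= (eq_bigr _ step) -big_distrl /=.
rewrite big_rmcond ?sum_m ?factS // => t.
by rewrite lt0n negbK => /eqP.
Qed.

Definition colour_vector k (h : {ffun 'I_k -> C}) : {ffun C -> 'I_k.+1} :=
  [ffun s => inord (colour_count h s)].

Lemma colour_vectorE k (h : {ffun 'I_k -> C}) s : colour_vector h s = colour_count h s :> nat.
Proof. by rewrite ffunE inordK // ltnS colour_count_le. Qed.

Lemma sum_colour_vector k (h : {ffun 'I_k -> C}) : \sum_s colour_vector h s = k.
Proof.
by rewrite -[RHS](sum_colour_count h); apply: eq_bigr => s _; rewrite colour_vectorE.
Qed.

Lemma sum_pred_colour_vector (P : pred C) k (h : {ffun 'I_k -> C}) :
  \sum_(q < k) P (h q) = \sum_(s | P s) colour_vector h s.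
Proof.
by rewrite sum_pred_colour_count; apply: eq_bigr => s _; rewrite colour_vectorE.
Qed.

Lemma prod_colour_vector (R : comPzSemiRingType) (w : C -> R) k (h : {ffun 'I_k -> C}) :
  (\prod_(q < k) w (h q) = \prod_s w s ^+ colour_vector h s)%R.
Proof.
have wE x : w x = (\prod_s w s ^+ (x == s))%R.
  by rewrite (bigD1 x) //= eqxx expr1 big1 ?mulr1 // => s; rewrite eq_sym => /negbTE ->.
rewrite (eq_bigr _ (fun q _ => wE (h q))) exchange_big.
by apply: eq_bigr => s _; rewrite prodrXr colour_vectorE.
Qed.

Lemma colour_vector_eq k (h : {ffun 'I_k -> C}) (m : {ffun C -> 'I_k.+1}) :
  (colour_vector h == m) = (h \in colourings k (fun s => m s)).
Proof.
rewrite inE; apply/eqP/forallP => [<- s | hm]; first by rewrite colour_vectorE.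
by apply/ffunP => s; apply/val_inj; rewrite /= colour_vectorE; apply/eqP.
Qed.

Lemma partition_colour_vector (V : nmodType) k (F : {ffun C -> 'I_k.+1} -> V) :
  (\sum_(h : {ffun 'I_k -> C}) F (colour_vector h) =
   \sum_(m : {ffun C -> 'I_k.+1} | (\sum_s m s)%N == k)
     F m *+ #|colourings k (fun s => m s)|)%R.
Proof.
rewrite (partition_big (@colour_vector k) (fun m => \sum_s m s == k)) => [|h _]; last first.
  by rewrite sum_colour_vector.
apply: eq_bigr => m _.
rewrite (eq_bigl [in colourings k (fun s => m s)]) => [|h]; last first.
  by rewrite /= colour_vector_eq.
rewrite (eq_bigr (fun _ => F m)) ?sumr_const // => h.
by rewrite -colour_vector_eq => /eqP ->.
Qed.

End Colourings.

Lemma sum_ffun_comp (T C : finType) (c : T -> C) k (V : nmodType)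
    (F : {ffun 'I_k -> C} -> V) :
  (\sum_(g : {ffun 'I_k -> T}) F [ffun q => c (g q)] =
   \sum_(h : {ffun 'I_k -> C}) F h *+ (\prod_(q < k) #|[pred t | c t == h q]|)%N)%R.
Proof.
rewrite (partition_big (fun g : {ffun 'I_k -> T} => [ffun q => c (g q)]) xpredT) //=.
apply: eq_bigr => h _.
rewrite (eq_bigl [in family (fun q => [pred t | c t == h q])]) => [|g]; last first.
  apply/eqP/familyP => [<- q | gh]; first by rewrite ffunE inE.
  by apply/ffunP => q; rewrite ffunE; apply/eqP/gh.
rewrite (eq_bigr (fun _ => F h)) ?sumr_const => [|g /familyP gh]; last first.
  by congr F; apply/ffunP => q; rewrite ffunE; apply/eqP/gh.
by rewrite card_family foldrE big_map big_enum.
Qed.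

Lemma cards_sum (T : finType) (P : pred T) : #|[set x | P x]| = \sum_x P x.
Proof. by rewrite -sum1dep_card big_mkcond; apply: eq_bigr => x _; case: (P x). Qed.

Lemma card_sum (T : finType) (P : pred T) : #|[pred x | P x]| = \sum_x P x.
Proof. by rewrite -sum1_card big_mkcond; apply: eq_bigr => x _; rewrite inE; case: (P x). Qed.

Definition literal_cfg n (z1 z0 zm1 : 'I_n -> bool) (p : 'I_n * bool) : cfg :=
  ((z1 p.1 (+) p.2, z0 p.1 (+) p.2), zm1 p.1 (+) p.2).

Lemma cfgCK : involutive cfgC.
Proof. by case=> [[a b] c]; rewrite /cfgC /= !negbK. Qed.

Lemma card_literal_cfg n (z1 z0 zm1 : 'I_n -> bool) s :
  #|[pred p | literal_cfg z1 z0 zm1 p == s]| =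
  basis_num z1 z0 zm1 s + basis_num z1 z0 zm1 (cfgC s).
Proof.
pose z l : cfg := ((z1 l, z0 l), zm1 l).
have lit_false l : literal_cfg z1 z0 zm1 (l, false) = z l.
  by rewrite /literal_cfg /= !addbF.
have lit_true l : literal_cfg z1 z0 zm1 (l, true) = cfgC (z l).
  by rewrite /literal_cfg /= !addbT.
rewrite /basis_num !cards_sum card_sum -big_split /=.
transitivity (\sum_l \sum_b (literal_cfg z1 z0 zm1 (l, b) == s : nat)).
  by rewrite pair_bigA; apply: eq_bigr => -[].
apply: eq_bigr => l _; rewrite big_bool addnC lit_false lit_true inv_eq //.
exact: cfgCK.
Qed.

Local Open Scope ring_scope.

Lemma sum_ffun_comp_multinomial (F : numFieldType) (T C : finType) (c : T -> C) k
    (G : {ffun C -> 'I_k.+1} -> F) :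
  \sum_(g : {ffun 'I_k -> T}) G (colour_vector [ffun q => c (g q)]) =
  \sum_(m : {ffun C -> 'I_k.+1} | (\sum_s m s)%N == k)
    k`!%:R / (\prod_s (m s)`!)%:R * \prod_s #|[pred t | c t == s]|%:R ^+ m s * G m.
Proof.
rewrite (sum_ffun_comp c (fun h => G (colour_vector h))).
under eq_bigr do rewrite -mulr_natr natr_prod
  (prod_colour_vector (fun s => #|[pred t | c t == s]|%:R)).
rewrite (partition_colour_vector (fun m => G m * \prod_s #|[pred t | c t == s]|%:R ^+ m s)).
apply: eq_bigr => m /eqP sum_m.
have fact_neq0 : (\prod_s (m s)`!)%:R != 0 :> F.
  by rewrite pnatr_eq0 -lt0n prodn_gt0 // => s; apply: fact_gt0.
rewrite -(card_colourings sum_m) natrM mulfK //.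
by rewrite -[_ *+ #|colourings _ _|]mulr_natr; ring.
Qed.

Theorem mainTheorem7 (R : realType) (k n : nat) (hk : (0 < k)%N) (hn : (0 < n)%N)
    (f : 'I_k.+1 -> 'I_k.+1 -> 'I_k.+1 -> R[i])
    (z1 z0 zm1 : 'I_n -> bool) :
  clause_exp (fun sigma : clause n k =>
      f (inord (clause_sum z1 sigma)) (inord (clause_sum z0 sigma))
        (inord (clause_sum zm1 sigma)))
  = (2 ^ k)%N%:R^-1 *
    \sum_(kk : {ffun cfg -> 'I_k.+1} | (\sum_(s : cfg) kk s)%N == k)
      ((k`!)%:R / (\prod_(s : cfg) (kk s)`!)%:R) *
      (\prod_(s : cfg)
          (((basis_num z1 z0 zm1 s + basis_num z1 z0 zm1 (cfgC s))%N%:R / n%:R)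
             ^+ kk s)) *
      f (inord (\sum_(s : cfg | cfg1 s) kk s)%N)
        (inord (\sum_(s : cfg | cfg0 s) kk s)%N)
        (inord (\sum_(s : cfg | cfgm1 s) kk s)%N).
Proof.
pose N s := (basis_num z1 z0 zm1 s + basis_num z1 z0 zm1 (cfgC s))%N.
pose G (m : {ffun cfg -> 'I_k.+1}) := f (inord (\sum_(s | cfg1 s) m s)%N)
  (inord (\sum_(s | cfg0 s) m s)%N) (inord (\sum_(s | cfgm1 s) m s)%N).
have summandE (sigma : clause n k) :
    f (inord (clause_sum z1 sigma)) (inord (clause_sum z0 sigma))
      (inord (clause_sum zm1 sigma)) =
    G (colour_vector [ffun q => literal_cfg z1 z0 zm1 (sigma q)]).
  by rewrite /G -!sum_pred_colour_vector; congr f; congr inord;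
     apply: eq_bigr => q _; rewrite ffunE.
rewrite /clause_exp (eq_bigr _ (fun sigma _ => summandE sigma)).
rewrite sum_ffun_comp_multinomial !big_distrr /=; apply: eq_bigr => m /eqP sum_m.
have -> : \prod_s #|[pred p | literal_cfg z1 z0 zm1 p == s]|%:R ^+ m s =
           \prod_s (N s)%:R ^+ m s :> R[i].
  by apply: eq_bigr => s _; rewrite card_literal_cfg.
have -> : \prod_s ((N s)%:R / n%:R) ^+ m s = \prod_s (N s)%:R ^+ m s / n%:R ^+ k :> R[i].
  rewrite (eq_bigr (fun s => (N s)%:R ^+ m s * n%:R^-1 ^+ m s)) => [|s _]; last first.
    exact: exprMn.
  by rewrite big_split /= prodrXr sum_m exprVn.
by rewrite /G !natrX natrM exprMn invfM; ring.
Qed.
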